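(* Consider the two-party spatial voting game with abstention described in the context, and suppose that the set of active voters is the same at every pair of distinct platforms, i.e. there is a set $W\subseteq V$ such that for all $s,t\in X$ with $s\neq t$, the set of voters active at $(s,t)$ equals $W$. Then no pure-strategy Nash equilibrium $(s,t)$ exhibits mutual leapfrogging, i.e. there is no pure-strategy Nash equilibrium $(s,t)$ with $t<\tau_A<\tau_B<s$.
   Context: Policy space: $X=\{x_j : j\in I\}$ where $I\subseteq\mathbb Z$ is an interval of integers and $x_j<x_{j+1}$; $X$ is linearly ordered by $<$. Parties: two parties $A$ and $B$ with ideal points $\tau_A=x_p$ and $\tau_B=x_q$, where $p<q$. Each party $i\in\{A,B\}$ has a weak preference order $\succeq_i$ on $X$ with unique ideal (most preferred) point $\tau_i$; $x\succ_i y$ means $x\succeq_i y$ and not $y\succeq_i x$. Voters: a finite electorate $V$. Each voter $v\in V$ has an ideal point $\theta_v\in X$, strict preferences over $X$ that are single-peaked with peak $\theta_v$ (if $x_a<x_b\le\theta_v$ then $x_b$ is strictly preferred to $x_a$, and if $\theta_v\le x_b<x_a$ then $x_b$ is strictly preferred to $x_a$), and an attraction interval $A_v\subseteq X$, an interval of the order on $X$ containing $\theta_v$. Election: party $A$ chooses $s\in X$, party $B$ chooses $t\in X$. Voter $v$ is active at $(s,t)$ if $s\in A_v$ or $t\in A_v$. An active voter votes for the platform she strictly prefers and abstains if indifferent (in particular if $s=t$); inactive voters abstain. $N_A(s,t)$ (resp. $N_B(s,t)$) is the number of active voters strictly preferring $s$ to $t$ (resp. $t$ to $s$). The outcome $g(s,t)$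 is $A$ if $N_A>N_B$, $B$ if $N_B>N_A$, and $T$ (tie) if equal. Party objectives (lexicographic): Win $\succ$ Tie $\succ$ Lose for each party (outcome $A$ is a win for $A$ and a loss for $B$, and vice versa); between profiles with the same electoral outcome, $A$ weakly prefers $(s,t)$ to $(s',t')$ iff $s\succeq_A s'$, and $B$ iff $t\succeq_B t'$. A pure-strategy Nash equilibrium is a profile at which neither party has a strictly preferred unilateral deviation. *)

From mathcomp Require Import all_boot all_order all_algebra.
Set Implicit Arguments. Unset Strict Implicit. Unset Printing Implicit Defensive.
Import Order.TTheory GRing.Theory Num.Theory.
Local Open Scope ring_scope.

(* Policies x_j are represented by their indices j : int; the index set I
   is an interval of integers (given as a boolean predicate).  Since
   x_j < x_{j+1}, the order on X coincides with the order on indices. *)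

Definition int_interval (I : int -> bool) : Prop :=
  forall a b c, I a -> I c -> a <= b -> b <= c -> I b.

Definition sub_interval (I A : int -> bool) : Prop :=
  (forall j, A j -> I j) /\ int_interval A.

Definition strict_total_on (I : int -> bool) (P : int -> int -> bool) : Prop :=
  [/\ (forall x, I x -> ~~ P x x),
      (forall x y z, I x -> I y -> I z -> P x y -> P y z -> P x z) &
      (forall x y, I x -> I y -> x != y -> P x y || P y x)].

Definition single_peaked (I : int -> bool) (P : int -> int -> bool) (th : int) : Prop :=
  forall a b, I a -> I b ->
    ((a < b) && (b <= th) -> P b a) /\ ((th <= b) && (b < a) -> P b a).

(* R x y : x is weakly preferred to y (x ⪰ y): complete and transitive on X. *)
Definition weak_order_on (I : int -> bool) (R : int -> int -> bool) : Prop :=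
  (forall x y, I x -> I y -> R x y || R y x) /\
  (forall x y z, I x -> I y -> I z -> R x y -> R y z -> R x z).

Definition strict_of (R : int -> int -> bool) (x y : int) : bool :=
  R x y && ~~ R y x.

Definition unique_ideal (I : int -> bool) (R : int -> int -> bool) (tau : int) : Prop :=
  I tau /\ (forall x, I x -> x != tau -> strict_of R tau x).

Record game (V : finType) := Game {
  polI : int -> bool;
  theta : V -> int;
  vpref : V -> int -> int -> bool;    (* vpref v x y : v strictly prefers x to y *)
  attr : V -> int -> bool;
  tauA : int; tauB : int;
  prefA : int -> int -> bool;
  prefB : int -> int -> bool
}.

Definition wf_game (V : finType) (G : game V) : Prop :=
  int_interval (polI G) /\
  (forall v, polI G (theta G v)) /\
  (forall v, strict_total_on (polI G) (vpref G v)) /\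
  (forall v, single_peaked (polI G) (vpref G v) (theta G v)) /\
  (forall v, sub_interval (polI G) (attr G v) /\ attr G v (theta G v)) /\
  (weak_order_on (polI G) (prefA G) /\ unique_ideal (polI G) (prefA G) (tauA G)) /\
  (weak_order_on (polI G) (prefB G) /\ unique_ideal (polI G) (prefB G) (tauB G)) /\
  tauA G < tauB G.

Section Game.
Variables (V : finType) (G : game V).

Definition active (v : V) (s t : int) : bool := attr G v s || attr G v t.

Definition NA (s t : int) : nat := #|[set v : V | active v s t && vpref G v s t]|.
Definition NB (s t : int) : nat := #|[set v : V | active v s t && vpref G v t s]|.

Inductive outcome := OA | OB | OT.

Definition g (s t : int) : outcome :=
  if (NB s t < NA s t)%N then OA else if (NA s t < NB s t)%N then OB else OT.

Definition rankA (o : outcome) : nat := match o with OA => 2 | OT => 1 | OB => 0 end.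
Definition rankB (o : outcome) : nat := match o with OB => 2 | OT => 1 | OA => 0 end.

Definition A_strictly_prefers (s' t' s t : int) : Prop :=
  (rankA (g s t) < rankA (g s' t'))%N \/
  (rankA (g s' t') = rankA (g s t) /\ strict_of (prefA G) s' s).

Definition B_strictly_prefers (s' t' s t : int) : Prop :=
  (rankB (g s t) < rankB (g s' t'))%N \/
  (rankB (g s' t') = rankB (g s t) /\ strict_of (prefB G) t' t).

Definition nash (s t : int) : Prop :=
  [/\ polI G s, polI G t,
      (forall s', polI G s' -> ~ A_strictly_prefers s' t s t) &
      (forall t', polI G t' -> ~ B_strictly_prefers s t' s t)].

End Game.

From mathcomp Require Import all_boot all_order all_algebra.
From mathcomp Require Import zify.
Set Implicit Arguments. Unset Strict Implicit. Unset Printing Implicit Defensive.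
Import Order.TTheory GRing.Theory Num.Theory.
Local Open Scope ring_scope.

(* At an equilibrium the outcome must be a tie, since the loser could copy the
   winner's platform.  If t < tau_A < tau_B < s, each party strictly prefers its
   own ideal point to its current platform, so moving there must turn the tie
   into a defeat: tau_A loses against t and tau_B loses against s.  With a
   fixed set W of active voters, single-peakedness bounds the two vote counts
   by the numbers of voters of W on either side of tau_A resp. tau_B, and the
   two defeats give the circular chain
   #{theta < tau_A} <= #{theta <= tau_B} < #{theta > tau_B} <= #{theta >= tau_A}
   < #{theta < tau_A}. *)

Section SinglePeaked.
Variables (I : int -> bool) (P : int -> int -> bool) (th : int).
Hypotheses (P_strict : strict_total_on I P) (P_peak : single_peaked I P th).

Lemma strict_total_asym x y : I x -> I y -> P x y -> ~~ P y x.
Proof.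
case: P_strict => irr trans _ Ix Iy Pxy; apply/negP => Pyx.
by move/negP: (irr x Ix); apply; apply: trans Pxy Pyx.
Qed.

Lemma single_peaked_right x y : I x -> I y -> x < y -> y <= th -> P y x.
Proof. by move=> Ix Iy xy yth; apply: (proj1 (P_peak Ix Iy)); rewrite xy yth. Qed.

Lemma single_peaked_left x y : I x -> I y -> x < y -> th <= x -> P x y.
Proof. by move=> Ix Iy xy thx; apply: (proj2 (P_peak Iy Ix)); rewrite thx xy. Qed.

Lemma single_peaked_pref_left x y : I x -> I y -> x < y -> P x y -> th < y.
Proof.
move=> Ix Iy xy Pxy; rewrite ltNge; apply/negP => yth.
by move/negP: (strict_total_asym Ix Iy Pxy); apply; apply: single_peaked_right.
Qed.

Lemma single_peaked_pref_right x y : I x -> I y -> x < y -> P y x -> x < th.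
Proof.
move=> Ix Iy xy Pyx; rewrite ltNge; apply/negP => thx.
by move/negP: (strict_total_asym Iy Ix Pyx); apply; apply: single_peaked_left.
Qed.

End SinglePeaked.

Section Game.
Variables (V : finType) (G : game V).
Hypotheses (vpref_strict : forall v, strict_total_on (polI G) (vpref G v))
           (vpref_peak : forall v, single_peaked (polI G) (vpref G v) (theta G v)).

Lemma g_OA s t : g G s t = OA -> (NB G s t < NA G s t)%N.
Proof. by rewrite /g; case: ltnP => //; case: ltnP. Qed.

Lemma g_OB s t : g G s t = OB -> (NA G s t < NB G s t)%N.
Proof. by rewrite /g; case: ltnP => //; case: ltnP. Qed.

Lemma g_diag x : polI G x -> g G x x = OT.
Proof.
move=> Ix; rewrite /g /NA /NB.
have -> : [set v | active G v x x && vpref G v x x] = set0.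
  apply/setP => v; case: (vpref_strict v) => irr _ _.
  by rewrite !inE (negbTE (irr x Ix)) andbF.
by rewrite cards0.
Qed.

Lemma nash_tie s t : nash G s t -> g G s t = OT.
Proof.
move=> [Is It devA devB]; case E: (g G s t) => //.
- by case: (devB s Is); left; rewrite g_diag ?E.
- by case: (devA t It); left; rewrite g_diag ?E.
Qed.

Lemma nash_tie_better_A_loses s t s' : nash G s t -> g G s t = OT ->
  polI G s' -> strict_of (prefA G) s' s -> g G s' t = OB.
Proof.
move=> [_ _ devA _] tie Is' better; case E: (g G s' t) => //; case: (devA s' Is').
- by left; rewrite E tie.
- by right; rewrite E tie.
Qed.

Lemma nash_tie_better_B_loses s t t' : nash G s t -> g G s t = OT ->
  polI G t' -> strict_of (prefB G) t' t -> g G s t' = OA.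
Proof.
move=> [_ _ _ devB] tie It' better; case E: (g G s t') => //; case: (devB t' It').
- by left; rewrite E tie.
- by right; rewrite E tie.
Qed.

Definition supporters (W : {set V}) (x y : int) : {set V} :=
  [set v in W | vpref G v x y].

Definition peak_in (W : {set V}) (Q : pred int) : {set V} :=
  [set v in W | Q (theta G v)].

Lemma NA_supporters (W : {set V}) s t :
  (forall v, active G v s t = (v \in W)) -> NA G s t = #|supporters W s t|.
Proof. by move=> act; apply: eq_card => v; rewrite !inE act. Qed.

Lemma NB_supporters (W : {set V}) s t :
  (forall v, active G v s t = (v \in W)) -> NB G s t = #|supporters W t s|.
Proof. by move=> act; apply: eq_card => v; rewrite !inE act. Qed.

Lemma card_peak_in_mono (W : {set V}) (Q Q' : pred int) :
  (forall z, Q z -> Q' z) -> (#|peak_in W Q| <= #|peak_in W Q'|)%N.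
Proof.
move=> QQ'; apply/subset_leq_card/subsetP => v.
by rewrite !inE => /andP[-> /QQ'].
Qed.

Section Bounds.
Variables (W : {set V}) (x y : int).
Hypotheses (Ix : polI G x) (Iy : polI G y) (xy : x < y).

Lemma card_peak_ge_supporters :
  (#|peak_in W (fun z => (y <= z)%R)| <= #|supporters W y x|)%N.
Proof.
apply/subset_leq_card/subsetP => v; rewrite !inE => /andP[-> yth] /=.
exact: (single_peaked_right (vpref_peak v) Ix Iy xy yth).
Qed.

Lemma card_supporters_peak_lt :
  (#|supporters W x y| <= #|peak_in W (fun z => (z < y)%R)|)%N.
Proof.
apply/subset_leq_card/subsetP => v; rewrite !inE => /andP[-> Pxy] /=.
exact: (single_peaked_pref_left (vpref_strict v) (vpref_peak v) Ix Iy xy Pxy).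
Qed.

Lemma card_peak_le_supporters :
  (#|peak_in W (fun z => (z <= x)%R)| <= #|supporters W x y|)%N.
Proof.
apply/subset_leq_card/subsetP => v; rewrite !inE => /andP[-> thx] /=.
exact: (single_peaked_left (vpref_peak v) Ix Iy xy thx).
Qed.

Lemma card_supporters_peak_gt :
  (#|supporters W y x| <= #|peak_in W (fun z => (x < z)%R)|)%N.
Proof.
apply/subset_leq_card/subsetP => v; rewrite !inE => /andP[-> Pyx] /=.
exact: (single_peaked_pref_right (vpref_strict v) (vpref_peak v) Ix Iy xy Pyx).
Qed.

End Bounds.

Lemma outer_platforms_cannot_both_win (W : {set V}) s t a b :
  polI G s -> polI G t -> polI G a -> polI G b -> t < a -> a < b -> b < s ->
  (forall v, active G v a t = (v \in W)) ->
  (forall v, active G v s b = (v \in W)) ->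
  g G a t = OB -> g G s b = OA -> False.
Proof.
move=> Is It Ia Ib ta ab bs actL actR /g_OB winL /g_OA winR.
move: winL winR; rewrite (NA_supporters actL) (NB_supporters actL).
rewrite (NA_supporters actR) (NB_supporters actR).
have := card_peak_ge_supporters W It Ia ta.
have := card_supporters_peak_lt W It Ia ta.
have := card_peak_le_supporters W Ib Is bs.
have := card_supporters_peak_gt W Ib Is bs.
have := card_peak_in_mono W (Q := fun z => (z < a)%R) (Q' := fun z => (z <= b)%R)
  (fun z za => ltW (lt_trans za ab)).
have := card_peak_in_mono W (Q := fun z => (b < z)%R) (Q' := fun z => (a <= z)%R)
  (fun z bz => ltW (lt_trans ab bz)).
lia.
Qed.

End Game.

Theorem proposition2 (V : finType) (G : game V) :
  wf_game G ->
  (exists W : {set V}, forall s t, polI G s -> polI G t -> s != t ->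
      forall v : V, active G v s t = (v \in W)) ->
  ~ (exists s t, nash G s t /\ t < tauA G /\ tauA G < tauB G /\ tauB G < s).
Proof.
move=> [_ [_ [Hstr [Hsp [_ [[_ [IA uA]] [[_ [IB uB]] _]]]]]]] [W hW].
move=> [s [t [Nst [tA [AB Bs]]]]]; have [Is It _ _] := Nst.
have tie := nash_tie Hstr Nst.
have lossA : g G (tauA G) t = OB.
  apply: nash_tie_better_A_loses Nst tie IA (uA s Is _).
  by rewrite gt_eqF // (lt_trans AB Bs).
have lossB : g G s (tauB G) = OA.
  apply: nash_tie_better_B_loses Nst tie IB (uB t It _).
  by rewrite lt_eqF // (lt_trans tA AB).
apply: (outer_platforms_cannot_both_win Hstr Hsp Is It IA IB tA AB Bs _ _ lossA lossB).
- exact: hW (negbT (gt_eqF tA)).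
- exact: hW (negbT (gt_eqF Bs)).
Qed.
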